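(* If $G$ is a permutation graph then $L(G)^2$ is a trapezoid graph.
   Context: A permutation diagram on $n$ points: two horizontal lines $L_1,L_2$, on each of which the points $1,\dots,n$ are placed in some linear order, and for each $k$ the two points labeled $k$ are joined by a straight segment. A permutation graph is the intersection graph of the segments of a permutation diagram. A trapezoid diagram: on each of two horizontal lines $L_1,L_2$ choose $n$ intervals, and for each $k$ connect the left and right endpoints of the $k$-th interval on $L_1$ with the left and right endpoints of the $k$-th interval on $L_2$, giving $n$ trapezoids. A trapezoid graph is the intersection graph of the trapezoids of a trapezoid diagram. For a graph $H$, $L(H)^2$ has the edges of $H$ as vertices, two distinct edges $e,f$ being adjacent if they share an endpoint or some edge of $H$ joins an endpoint of $e$ to an endpoint of $f$. *)

From HB Require Import structures.
From mathcomp Require Import all_boot all_order all_algebra.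
From mathcomp Require Import reals.
Set Implicit Arguments. Unset Strict Implicit. Unset Printing Implicit Defensive.
Import Order.TTheory GRing.Theory Num.Theory.
Local Open Scope ring_scope.

Definition simple_graph (T : finType) (e : rel T) : Prop :=
  symmetric e /\ irreflexive e.

(* The plane is R * R; L1 is the line y = 0, L2 is the line y = 1. *)

Definition segment (R : realType) (a b : R) (p : R * R) : Prop :=
  0 <= p.2 <= 1 /\ p.1 = (1 - p.2) * a + p.2 * b.

(* The (closed) trapezoid with interval [l1, r1] on L1 and [l2, r2] on L2,
   i.e. the convex hull of the four endpoints. *)
Definition trapezoid (R : realType) (l1 r1 l2 r2 : R) (p : R * R) : Prop :=
  0 <= p.2 <= 1 /\
  (1 - p.2) * l1 + p.2 * l2 <= p.1 <= (1 - p.2) * r1 + p.2 * r2.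

Definition is_permutation_graph (R : realType) (T : finType) (e : rel T) : Prop :=
  exists p1 p2 : T -> R, injective p1 /\ injective p2 /\
    forall u v : T, u != v ->
      (e u v <-> exists p, segment (p1 u) (p2 u) p /\ segment (p1 v) (p2 v) p).

Definition is_trapezoid_graph (R : realType) (T : finType) (e : rel T) : Prop :=
  exists l1 r1 l2 r2 : T -> R,
    (forall k, l1 k <= r1 k /\ l2 k <= r2 k) /\
    forall u v : T, u != v ->
      (e u v <-> exists p, trapezoid (l1 u) (r1 u) (l2 u) (r2 u) p /\
                           trapezoid (l1 v) (r1 v) (l2 v) (r2 v) p).

Definition is_edge (T : finType) (e : rel T) : pred {set T} :=
  fun A => [exists u, exists v, e u v && (A == [set u; v])].

Definition edge_type (T : finType) (e : rel T) := {A : {set T} | is_edge e A}.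

Definition L2_adj (T : finType) (e : rel T) : rel (edge_type e) :=
  fun f g => (f != g) &&
    [exists x in val f, exists y in val g, (x == y) || e x y].

(* Order the segments of the permutation diagram by dominance: a precedes b
   when a lies strictly left of b on both lines.  Two segments meet exactly
   when they are incomparable, so the graph is the incomparability graph of
   this order.  Give each edge uv the trapezoid spanned by the segments of u
   and v.  If two edges are at distance >= 2 in the line graph, every endpoint
   of one is comparable with every endpoint of the other, while the endpoints
   of each edge are incomparable; transitivity then forces one edge entirely
   below the other, and their trapezoids are strictly separated.  Conversely,
   adjacent or joined edges contain meeting segments. *)
From HB Require Import structures.
From mathcomp Require Import all_boot all_order all_algebra.
From mathcomp Require Import reals.
From mathcomp Require Import ring lra.
Set Implicit Arguments. Unset Strict Implicit. Unset Printing Implicit Defensive.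
Import Order.TTheory GRing.Theory Num.Theory.
Local Open Scope ring_scope.

Section Strip.
Variable R : realType.

Lemma segment_sub_trapezoid (a b l1 r1 l2 r2 : R) p :
  l1 <= a <= r1 -> l2 <= b <= r2 -> segment a b p -> trapezoid l1 r1 l2 r2 p.
Proof.
case: p => x t /andP[la ar] /andP[lb br] [/= /andP[t0 t1] ->].
have t1' : 0 <= 1 - t by rewrite subr_ge0.
rewrite /trapezoid /= t0 t1; split => //.
apply/andP; split.
- have := mulr_ge0 t1' (eqbRL (subr_ge0 l1 a) la).
  have := mulr_ge0 t0 (eqbRL (subr_ge0 l2 b) lb); nra.
- have := mulr_ge0 t1' (eqbRL (subr_ge0 a r1) ar).
  have := mulr_ge0 t0 (eqbRL (subr_ge0 b r2) br); nra.
Qed.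

Lemma trapezoid_separated (l1 r1 l2 r2 l1' r1' l2' r2' : R) p :
  r1 < l1' -> r2 < l2' ->
  trapezoid l1 r1 l2 r2 p -> trapezoid l1' r1' l2' r2' p -> False.
Proof.
case: p => x t lt1 lt2; rewrite /trapezoid /= => -[/andP[t0 t1] /andP[_ xr]] [_ /andP[lx _]].
(* at every height the two trapezoids are at least m apart *)
pose m := Num.min (l1' - r1) (l2' - r2).
have m0 : 0 < m by rewrite lt_min !subr_gt0 lt1 lt2.
have m1 : m <= l1' - r1 by rewrite ge_min lexx.
have m2 : m <= l2' - r2 by rewrite ge_min lexx orbT.
nra.
Qed.

Lemma segments_cross (a b c d : R) :
  a < c -> d < b -> exists p, segment a b p /\ segment c d p.
Proof.
move=> ac db; pose D := (c - a) + (b - d).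
have D0 : 0 < D by rewrite addr_gt0 // subr_gt0.
pose t := (c - a) / D.
have tD : t * D = c - a by rewrite mulfVK // gt_eqF.
have t0 : 0 <= t by rewrite divr_ge0 // ltW // subr_gt0.
have t1 : t <= 1 by rewrite ler_pdivrMr // mul1r lerDl subr_ge0 ltW.
exists ((1 - t) * a + t * b, t); rewrite /segment /= t0 t1.
by split; split => //; rewrite /D in tD; lra.
Qed.

End Strip.

Lemma comparable_pairs_ordered_from (T : Type) (lt : rel T) (u v x y : T) :
  transitive lt -> ~~ lt u v -> ~~ lt y x ->
  lt u y || lt y u -> lt v x || lt x v -> lt v y || lt y v ->
  lt u x -> [&& lt u y, lt v x & lt v y].
Proof.
move=> lt_trans nuv nyx cuy cvx cvy ux.
have uy : lt u y.
  by case/orP: cuy => // yu; case/negP: nyx; exact: lt_trans yu ux.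
have vx : lt v x.
  by case/orP: cvx => // xv; case/negP: nuv; exact: lt_trans ux xv.
have vy : lt v y.
  by case/orP: cvy => // yv; case/negP: nyx; exact: lt_trans yv vx.
by rewrite uy vx vy.
Qed.

Lemma comparable_pairs_ordered (T : Type) (lt : rel T) (u v x y : T) :
  transitive lt -> ~~ lt u v -> ~~ lt v u -> ~~ lt x y -> ~~ lt y x ->
  lt u x || lt x u -> lt u y || lt y u -> lt v x || lt x v -> lt v y || lt y v ->
  [&& lt u x, lt u y, lt v x & lt v y] || [&& lt x u, lt y u, lt x v & lt y v].
Proof.
move=> lt_trans nuv nvu nxy nyx /orP[ux | xu] cuy cvx cvy.
  by rewrite ux (comparable_pairs_ordered_from lt_trans).
have gt_trans : transitive (fun a b => lt b a).
  by move=> b a c ba cb; exact: lt_trans cb ba.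
by rewrite xu (comparable_pairs_ordered_from (lt := fun a b => lt b a) gt_trans)
  ?orbT // orbC.
Qed.

Section Edges.
Variables (T : finType) (e : rel T).

Lemma edge_ends_exists (f : edge_type e) :
  exists uv : T * T, e uv.1 uv.2 && (val f == [set uv.1; uv.2]).
Proof. by case/existsP: (valP f) => u /existsP[v huv]; exists (u, v). Qed.

Definition edge_ends (f : edge_type e) : T * T := xchoose (edge_ends_exists f).

Lemma edge_endsP (f : edge_type e) :
  e (edge_ends f).1 (edge_ends f).2 /\ val f = [set (edge_ends f).1; (edge_ends f).2].
Proof. by have /andP[? /eqP ?] := xchooseP (edge_ends_exists f). Qed.

Variables (R : realType) (p1 p2 : T -> R).

Definition edge_lo (q : T -> R) (f : edge_type e) : R :=
  Num.min (q (edge_ends f).1) (q (edge_ends f).2).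

Definition edge_hi (q : T -> R) (f : edge_type e) : R :=
  Num.max (q (edge_ends f).1) (q (edge_ends f).2).

Definition edge_trapezoid (f : edge_type e) : R * R -> Prop :=
  trapezoid (edge_lo p1 f) (edge_hi p1 f) (edge_lo p2 f) (edge_hi p2 f).

Lemma edge_lo_le_hi (q : T -> R) (f : edge_type e) : edge_lo q f <= edge_hi q f.
Proof. by rewrite ge_min !le_max !lexx. Qed.

Lemma edge_lo_hi (q : T -> R) (f : edge_type e) a :
  a \in val f -> edge_lo q f <= q a <= edge_hi q f.
Proof.
rewrite (edge_endsP f).2 /edge_lo /edge_hi => /set2P[]->;
by rewrite ge_min le_max lexx ?orbT.
Qed.

Lemma segment_sub_edge_trapezoid (f : edge_type e) a p :
  a \in val f -> segment (p1 a) (p2 a) p -> edge_trapezoid f p.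
Proof. by move=> af; apply: segment_sub_trapezoid; apply: edge_lo_hi. Qed.

Definition before : rel T := fun a b => (p1 a < p1 b) && (p2 a < p2 b).

Lemma before_trans : transitive before.
Proof.
move=> b a c /andP[ab1 ab2] /andP[bc1 bc2].
by rewrite /before (lt_trans ab1 bc1) (lt_trans ab2 bc2).
Qed.

Lemma edge_trapezoids_disjoint (f g : edge_type e) p :
  (forall a b, a \in val f -> b \in val g -> before a b) ->
  edge_trapezoid f p -> edge_trapezoid g p -> False.
Proof.
move=> fg; have [_ fE] := edge_endsP f; have [_ gE] := edge_endsP g.
have fg_ends a b : a \in [set (edge_ends f).1; (edge_ends f).2] ->
    b \in [set (edge_ends g).1; (edge_ends g).2] -> before a b.
  by rewrite -fE -gE; exact: fg.
move: (fg_ends _ _ (set21 _ _) (set21 _ _)) (fg_ends _ _ (set21 _ _) (set22 _ _))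
      (fg_ends _ _ (set22 _ _) (set21 _ _)) (fg_ends _ _ (set22 _ _) (set22 _ _)).
move=> /andP[? ?] /andP[? ?] /andP[? ?] /andP[? ?].
apply: trapezoid_separated; rewrite /edge_hi /edge_lo gt_max !lt_min;
by do !(apply/andP; split).
Qed.

Lemma segments_meet_not_before a b p :
  segment (p1 a) (p2 a) p -> segment (p1 b) (p2 b) p -> ~~ before a b.
Proof.
move=> sa sb; apply/negP => /andP[ab1 ab2].
have degenerate q r : segment q r p -> trapezoid q q r r p.
  by apply: segment_sub_trapezoid; rewrite lexx.
exact: trapezoid_separated ab1 ab2 (degenerate _ _ sa) (degenerate _ _ sb).
Qed.

Hypothesis p1_inj : injective p1.
Hypothesis p2_inj : injective p2.

Lemma incomparable_segments_meet a b : a != b ->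
  ~~ before a b -> ~~ before b a ->
  exists p, segment (p1 a) (p2 a) p /\ segment (p1 b) (p2 b) p.
Proof.
move=> ab; rewrite /before.
have ne1 : p1 a != p1 b by apply: contra ab => /eqP/p1_inj->.
have ne2 : p2 a != p2 b by apply: contra ab => /eqP/p2_inj->.
case: (ltgtP (p1 a) (p1 b)) ne1 => // lt1 _;
case: (ltgtP (p2 a) (p2 b)) ne2 => // lt2 _ //= _ _.
- exact: segments_cross.
- by have [p [? ?]] := segments_cross lt1 lt2; exists p.
Qed.

Hypothesis e_sym : symmetric e.
Hypothesis e_irr : irreflexive e.
Hypothesis e_segments : forall u v, u != v ->
  (e u v <-> exists p, segment (p1 u) (p2 u) p /\ segment (p1 v) (p2 v) p).

Lemma edge_segments_meet a b : e a b ->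
  exists p, segment (p1 a) (p2 a) p /\ segment (p1 b) (p2 b) p.
Proof.
move=> eab; have ab : a != b by apply: contraTneq eab => ->; rewrite e_irr.
exact/(e_segments ab).
Qed.

Lemma edge_incomparable a b : e a b -> ~~ before a b.
Proof. by case/edge_segments_meet=> p [sa sb]; exact: segments_meet_not_before sa sb. Qed.

Lemma nonedge_comparable a b : a != b -> ~~ e a b -> before a b || before b a.
Proof.
move=> ab; apply: contraR; rewrite negb_or => /andP[nab nba].
exact/(e_segments ab)/incomparable_segments_meet.
Qed.

Lemma meeting_segments_adj (f g : edge_type e) a b :
  a \in val f -> b \in val g -> (a == b) || e a b ->
  exists p, edge_trapezoid f p /\ edge_trapezoid g p.
Proof.
move=> af bg ab.
have [p [sa sb]] : exists p, segment (p1 a) (p2 a) p /\ segment (p1 b) (p2 b) p.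
  case/orP: ab => [/eqP<- | /edge_segments_meet //].
  by exists (p1 a, 0); rewrite /segment /= lexx ler01; split; split => //; ring.
by exists p; split;
  [exact: segment_sub_edge_trapezoid af sa | exact: segment_sub_edge_trapezoid bg sb].
Qed.

Lemma edge_trapezoids_meet_adj (f g : edge_type e) p :
  edge_trapezoid f p -> edge_trapezoid g p ->
  [exists x in val f, exists y in val g, (x == y) || e x y].
Proof.
move=> tf tg; apply: contraT => nadj.
have [euv fE] := edge_endsP f; have [exy gE] := edge_endsP g.
set u := (edge_ends f).1 in euv fE; set v := (edge_ends f).2 in euv fE.
set x := (edge_ends g).1 in exy gE; set y := (edge_ends g).2 in exy gE.
have cmp a b : a \in [set u; v] -> b \in [set x; y] -> before a b || before b a.
  move=> af bg; have [ab nab] : a != b /\ ~~ e a b.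
    apply/andP; rewrite -negb_or; apply: contra nadj => hab.
    by apply/existsP; exists a; rewrite fE af /=; apply/existsP; exists b; rewrite gE bg.
  exact: nonedge_comparable.
have := comparable_pairs_ordered before_trans (edge_incomparable euv)
  (edge_incomparable (eqbLR (e_sym u v) euv)) (edge_incomparable exy)
  (edge_incomparable (eqbLR (e_sym x y) exy))
  (cmp _ _ (set21 _ _) (set21 _ _)) (cmp _ _ (set21 _ _) (set22 _ _))
  (cmp _ _ (set22 _ _) (set21 _ _)) (cmp _ _ (set22 _ _) (set22 _ _)).
case/orP=> /and4P[h1 h2 h3 h4]; exfalso.
- apply: (edge_trapezoids_disjoint (f := f) (g := g) _ tf tg).
  by rewrite fE gE => a b /set2P[]-> /set2P[]->.
- apply: (edge_trapezoids_disjoint (f := g) (g := f) _ tg tf).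
  by rewrite fE gE => a b /set2P[]-> /set2P[]->.
Qed.

End Edges.

Theorem lemma6 (R : realType) (T : finType) (e : rel T) :
  simple_graph e -> is_permutation_graph R e ->
  is_trapezoid_graph R (@L2_adj T e).
Proof.
move=> [e_sym e_irr] [p1 [p2 [p1_inj [p2_inj e_segments]]]].
exists (edge_lo p1), (edge_hi p1), (edge_lo p2), (edge_hi p2); split.
  by move=> f; rewrite !edge_lo_le_hi.
move=> f g fg; split.
  case/andP=> _ /existsP[a /andP[af /existsP[b /andP[bg ab]]]].
  exact: meeting_segments_adj af bg ab.
move=> [p [tf tg]]; rewrite /L2_adj fg /=.
exact: (edge_trapezoids_meet_adj p1_inj p2_inj e_sym e_irr e_segments tf tg).
Qed.
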